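(* Let $G$ be a signed digraph on vertex set $\{1,\dots,n\}$ and let $H$ be a spanning subgraph of $G$ such that (i) $G$ has no arc from a sink of $H$ to a source of $H$, and (ii) $G$ has no arc (from any vertex) to a vertex that is isolated in $H$. Let $A$ be the set of sources of $H$ that are not sources of $G$, and $B$ the set of sinks of $H$ that are not sinks of $G$. Let $h:Y\to Y$ be a degree-bounded finite dynamical system on $H$ and let $\xi\in Y$. Then there exists a degree-bounded finite dynamical system $f:X\to X$ on $G$, with $Y\subseteq X$, such that: (1) $f(X)\subseteq Y$; (2) $f_i(X)\subseteq h_i(Y)$ for all $i\notin A$; (3) $f(x)=h(x)$ for all $x\in Y$ with $x_i=\xi_i$ for all $i\in B$; (4) $f_i(x)=h_i(x)$ for all $x\in Y$ and all vertices $i$ with $G_i\cap B=\emptyset$.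
   Context: A finite dynamical system (FDS) with $n$ components is a map $f=(f_1,\dots,f_n):X\to X$ where $X=X_1\times\cdots\times X_n$ and each $X_i$ is a nonempty finite interval of integers. A signed digraph is a pair $G=(V,E)$ with $E\subseteq V\times V\times\{+,-\}$; $(j,i,s)\in E$ is an arc from $j$ to $i$ of sign $s$ (loops allowed; $G$ may have both a positive and a negative arc from $j$ to $i$). $G_i$ denotes the set of $j$ having an arc to $i$ in $G$. In-degree $d^{\mathrm{in}}_G(i)$ and out-degree $d^{\mathrm{out}}_G(i)$ count arcs entering/leaving $i$, positive and negative arcs counted separately. A source has in-degree $0$, a sink out-degree $0$, an isolated vertex both. A spanning subgraph has the same vertex set and a subset of the arcs. The interaction graph of an FDS $f$ is the signed digraph on $\{1,\dots,n\}$ with a positive (resp. negative) arc from $j$ to $i$ iff there is $x\in X$ with $x_j<\max(X_j)$ and $f_i(x+e_j)-f_i(x)$ positive (resp. negative), $e_j$ the $j$-th unit vector; $f$ is an FDS on $G$ if $G$ is its interaction graph. $f$ is degree-bounded if, with $G$ its interaction graph, for every $i$: $|X_i|=2$ if $d^{\mathrm{out}}_G(i)=0<d^{\mathrm{in}}_G(i)$, and $|X_i|\le d^{\mathrm{out}}_G(i)+1$ otherwise. *)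

From mathcomp Require Import all_boot all_order all_algebra.
Set Implicit Arguments. Unset Strict Implicit. Unset Printing Implicit Defensive.
Import Order.TTheory GRing.Theory Num.Theory.
Local Open Scope ring_scope.

(* Vertices are 'I_n (i.e. {1..n} shifted to {0..n-1}). A state of an FDS
   with n components is an integer vector. *)
Definition state (n : nat) := {ffun 'I_n -> int}.

(* The box X = X_1 x ... x X_n with X_i = [lo i, hi i] (integers). *)
Definition inbox n (lo hi : 'I_n -> int) (x : state n) : Prop :=
  forall i, lo i <= x i <= hi i.

(* f is an FDS on the box [lo,hi]: intervals nonempty and f maps X into X
   (values of f outside X are irrelevant). *)
Definition is_fds n (lo hi : 'I_n -> int) (f : state n -> state n) : Prop :=
  (forall i, lo i <= hi i) /\ (forall x, inbox lo hi x -> inbox lo hi (f x)).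

(* Signed digraph on 'I_n: an arc ((j, i), s) goes from j to i with sign s
   (true = positive, false = negative). *)
Definition sgraph (n : nat) := {set 'I_n * 'I_n * bool}.

Definition indeg n (G : sgraph n) (i : 'I_n) : nat :=
  #|[set e in G | e.1.2 == i]|.
Definition outdeg n (G : sgraph n) (i : 'I_n) : nat :=
  #|[set e in G | e.1.1 == i]|.

Definition is_source n (G : sgraph n) i := indeg G i == 0%N.
Definition is_sink n (G : sgraph n) i := outdeg G i == 0%N.
Definition is_isolated n (G : sgraph n) i := is_source G i && is_sink G i.

Definition incr n (x : state n) (j : 'I_n) : state n :=
  [ffun k => x k + (k == j)%:Z].

Definition has_arc n (lo hi : 'I_n -> int) (f : state n -> state n)
  (j i : 'I_n) (s : bool) : Prop :=
  exists x, [/\ inbox lo hi x, x j < hi j &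
    (if s then 0 < f (incr x j) i - f x i else f (incr x j) i - f x i < 0)].

Definition is_interaction_graph n (lo hi : 'I_n -> int)
  (f : state n -> state n) (G : sgraph n) : Prop :=
  forall j i s, ((j, i), s) \in G <-> has_arc lo hi f j i s.

Definition fds_on n (lo hi : 'I_n -> int) (f : state n -> state n)
  (G : sgraph n) : Prop :=
  is_fds lo hi f /\ is_interaction_graph lo hi f G.

(* Degree-boundedness w.r.t. a given graph; |X_i| = hi i - lo i + 1. *)
Definition deg_bounded_wrt n (lo hi : 'I_n -> int) (G : sgraph n) : Prop :=
  forall i,
    if (outdeg G i == 0%N) && (0 < indeg G i)%N
    then hi i - lo i + 1 = 2
    else hi i - lo i + 1 <= (outdeg G i).+1%:Z.

Definition degree_bounded n (lo hi : 'I_n -> int) (f : state n -> state n)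
  : Prop :=
  forall G, is_interaction_graph lo hi f G -> deg_bounded_wrt lo hi G.

From mathcomp Require Import all_boot all_order all_algebra zify.
From Stdlib Require Import Classical.
Import Order.TTheory GRing.Theory Num.Theory.
Set Implicit Arguments. Unset Strict Implicit. Unset Printing Implicit Defensive.
Local Open Scope ring_scope.

(* Away from the new arcs [G :\: H], the extension is [h] composed with the
   retraction of [X] onto the neutral box, in which the coordinates of [B] are
   frozen at [xi].  Each vertex [j] gets one extra value of [X_j] per new arc
   leaving [j]; stepping [x_j] across it switches exactly that arc on, and an
   active arc into [i] sends [f_i] to the maximum or to the minimum of [h_i],
   chosen so that the jump has the sign of the arc.  Minimum-forcing arcs
   override maximum-forcing ones, and of two parallel new arcs the
   maximum-forcing one is switched on first, so every new arc is realised and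
   no other arc appears.  As [X_j] grows by the number of new arcs leaving [j],
   degree-boundedness is inherited from [h]. *)

Lemma is_sinkP n (K : sgraph n) j :
  reflect (forall i s, ((j, i), s) \notin K) (is_sink K j).
Proof.
rewrite /is_sink /outdeg cards_eq0; apply: (iffP eqP) => [K0 i s|noK].
  apply/negP => ji; have : ((j, i), s) \in [set e in K | e.1.1 == j] by rewrite inE ji eqxx.
  by rewrite K0 inE.
apply/setP => -[[a b] s]; rewrite !inE /=.
by apply/negbTE/andP => -[ab /eqP E]; subst; move: ab; apply/negP.
Qed.

Lemma is_sourceP n (K : sgraph n) i :
  reflect (forall j s, ((j, i), s) \notin K) (is_source K i).
Proof.
rewrite /is_source /indeg cards_eq0; apply: (iffP eqP) => [K0 j s|noK].
  apply/negP => ji; have : ((j, i), s) \in [set e in K | e.1.2 == i] by rewrite inE ji eqxx.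
  by rewrite K0 inE.
apply/setP => -[[a b] s]; rewrite !inE /=.
by apply/negbTE/andP => -[ab /eqP E]; subst; move: ab; apply/negP.
Qed.

Lemma not_sinkP n (K : sgraph n) j :
  reflect (exists i s, ((j, i), s) \in K) (~~ is_sink K j).
Proof.
rewrite /is_sink /outdeg -lt0n card_gt0; apply: (iffP (set0Pn _)) => [[[[a i] s]]|[i [s ji]]].
  by rewrite inE => /andP[ai /eqP/= aj]; exists i, s; rewrite -aj.
by exists ((j, i), s); rewrite inE ji eqxx.
Qed.

Lemma not_sourceP n (K : sgraph n) i :
  reflect (exists j s, ((j, i), s) \in K) (~~ is_source K i).
Proof.
rewrite /is_source /indeg -lt0n card_gt0; apply: (iffP (set0Pn _)) => [[[[j b] s]]|[j [s ji]]].
  by rewrite inE => /andP[ji /eqP/= bi]; exists j, s; rewrite -bi.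
by exists ((j, i), s); rewrite inE ji eqxx.
Qed.

Lemma indeg_subset n (K L : sgraph n) i : K \subset L -> (indeg K i <= indeg L i)%N.
Proof.
move=> KL; apply: subset_leq_card; apply/subsetP => e.
by rewrite !inE => /andP[/(subsetP KL) -> ->].
Qed.

Lemma outdeg_subset n (K L : sgraph n) j : K \subset L ->
  outdeg L j = (outdeg K j + #|[set e in L :\: K | e.1.1 == j]|)%N.
Proof.
move=> KL; rewrite /outdeg -(cardsID K [set e in L | e.1.1 == j]); congr (_ + _)%N.
  apply: eq_card => e; rewrite !inE andbC.
  by case: (boolP (e \in K)) => // /(subsetP KL) ->.
by apply: eq_card => e; rewrite !inE; case: (e \in K).
Qed.

Definition upd n (w : state n) (k : 'I_n) (a : int) : state n :=
  [ffun l => if l == k then a else w l].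

Lemma updE n (w : state n) k a l : upd w k a l = if l == k then a else w l.
Proof. by rewrite ffunE. Qed.

Lemma upd_id n (w : state n) k : upd w k (w k) = w.
Proof. by apply/ffunP => l; rewrite updE; case: eqP => // ->. Qed.

Lemma upd_upd n (w : state n) k a b : upd (upd w k a) k b = upd w k b.
Proof. by apply/ffunP => l; rewrite !updE; case: (l == k). Qed.

Lemma incr_upd n (w : state n) k : incr w k = upd w k (w k + 1).
Proof. by apply/ffunP => l; rewrite ffunE updE; case: eqP => [->|]; rewrite ?addr0. Qed.

Lemma incrE n (w : state n) k l : incr w k l = if l == k then w k + 1 else w l.
Proof. by rewrite incr_upd updE. Qed.

Lemma inbox_upd n lo hi (w : state n) k a :
  inbox lo hi w -> lo k <= a <= hi k -> inbox lo hi (upd w k a).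
Proof. by move=> Hw Ha l; rewrite updE; case: eqP => [->|]. Qed.

Lemma int_nondecr_on (g : int -> int) (lo hi : int) :
  (forall a, lo <= a -> a < hi -> g a <= g (a + 1)) ->
  forall a b, lo <= a -> a <= b -> b <= hi -> g a <= g b.
Proof.
move=> step a b la ab bh; have [m Eb] : exists m : nat, b = a + m%:Z by exists `|b - a|%N; lia.
subst b; elim: m bh {ab} => [|m IH] bh; first by rewrite addr0.
apply: le_trans (IH _) _; first lia.
have -> : a + m.+1%:Z = a + m%:Z + 1 by lia.
by apply: step; lia.
Qed.

Lemma int_max_exists (P : int -> Prop) (b v0 : int) :
  P v0 -> (forall v, P v -> v <= b) -> exists2 m, P m & forall v, P v -> v <= m.
Proof.
move=> Pv0 ub; have [d] : exists d : nat, b - v0 <= d%:Z by exists `|b - v0|%N; lia.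
elim: d v0 Pv0 => [|d IH] v0 Pv0 bd.
  by exists v0 => // v /ub; lia.
have [[v Pv lt]|nogt] := classic (exists2 v, P v & v0 < v).
  by apply: (IH v Pv); lia.
exists v0 => // v Pv; rewrite leNgt; apply/negP => lt.
by apply: nogt; exists v.
Qed.

Lemma int_min_exists (P : int -> Prop) (b v0 : int) :
  P v0 -> (forall v, P v -> b <= v) -> exists2 m, P m & forall v, P v -> m <= v.
Proof.
move=> Pv0 lb; have [||m Pm mmax] := @int_max_exists (fun v => P (- v)) (- b) (- v0).
- by rewrite opprK.
- by move=> v /lb; lia.
by exists (- m) => // v Pv; have := mmax (- v); rewrite opprK => /(_ Pv); lia.
Qed.

Lemma image_min_exists T (P : T -> Prop) (g : T -> int) b t0 :
  P t0 -> (forall t, P t -> b <= g t) ->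
  exists m, (exists2 t, P t & g t = m) /\ forall t, P t -> m <= g t.
Proof.
move=> Pt0 lb.
have [||m [t Pt <-] mmin] := @int_min_exists (fun v => exists2 t, P t & g t = v) b (g t0).
- by exists t0.
- by move=> v [t Pt <-]; apply: lb.
by exists (g t); split=> [|s Ps]; [exists t|apply: mmin; exists s].
Qed.

Lemma image_max_exists T (P : T -> Prop) (g : T -> int) b t0 :
  P t0 -> (forall t, P t -> g t <= b) ->
  exists m, (exists2 t, P t & g t = m) /\ forall t, P t -> g t <= m.
Proof.
move=> Pt0 ub.
have [||m [t Pt <-] mmax] := @int_max_exists (fun v => exists2 t, P t & g t = v) b (g t0).
- by exists t0.
- by move=> v [t Pt <-]; apply: ub.
by exists (g t); split=> [|s Ps]; [exists t|apply: mmax; exists s].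
Qed.

Section FdsOnGraph.
Variables (n : nat) (lo hi : 'I_n -> int) (f : state n -> state n) (K : sgraph n).
Hypothesis fK : fds_on lo hi f K.
Local Notation inX := (inbox lo hi).

Lemma fds_lo_le_hi k : lo k <= hi k.
Proof. by case: fK => -[]. Qed.

Lemma fds_inbox x : inX x -> inX (f x).
Proof. by case: fK => -[_ fX] _; apply: fX. Qed.

Lemma fds_arcP j i s : ((j, i), s) \in K <-> has_arc lo hi f j i s.
Proof. by case: fK => _ fG; apply: fG. Qed.

Lemma fds_monotone j i s w a b : ((j, i), s) \notin K -> inX w ->
  lo j <= a -> a <= b -> b <= hi j ->
  if s then f (upd w j b) i <= f (upd w j a) i else f (upd w j a) i <= f (upd w j b) i.
Proof.
move=> noK Hw la ab bh.
pose g c := if s then - f (upd w j c) i else f (upd w j c) i.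
suff : g a <= g b by rewrite /g; case: (s); rewrite ?lerN2.
apply: (int_nondecr_on (lo := lo j) (hi := hi j)) => // c lc ch.
rewrite /g leNgt; apply/negP => lt; move/negP: noK; apply; apply/fds_arcP.
exists (upd w j c); split; first by apply: inbox_upd => //; lia.
  by rewrite updE eqxx.
by rewrite incr_upd updE eqxx upd_upd; move: lt; case: (s); lia.
Qed.

Lemma fds_upd_indep j i w a : (forall s, ((j, i), s) \notin K) -> inX w ->
  lo j <= a <= hi j -> f (upd w j a) i = f w i.
Proof.
move=> noK Hw /andP[la ah]; have /andP[lw wh] := Hw j.
rewrite -{2}(upd_id w j); apply/le_anti/andP.
have [aw|/ltW wa] := lerP a (w j).
  by split; [have := fds_monotone (noK false) Hw la aw wh
            |have := fds_monotone (noK true) Hw la aw wh].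
by split; [have := fds_monotone (noK true) Hw lw wa ah
          |have := fds_monotone (noK false) Hw lw wa ah].
Qed.

Lemma fds_eq_on_in_neighbours i x y : inX x -> inX y ->
  (forall j s, ((j, i), s) \in K -> x j = y j) -> f x i = f y i.
Proof.
move=> Hx Hy agree.
pose mix (m : nat) : state n := [ffun l : 'I_n => if (l < m)%N then y l else x l].
have mix_in m : inX (mix m) by move=> l; rewrite ffunE; case: ifP.
suff : forall m, (m <= n)%N -> f (mix m) i = f x i.
  have -> : y = mix n by apply/ffunP => l; rewrite ffunE ltn_ord.
  by move/(_ n (leqnn n)).
elim=> [|m IH] mn.
  by congr (f _ i); apply/ffunP => l; rewrite ffunE.
have -> : mix m.+1 = upd (mix m) (Ordinal mn) (y (Ordinal mn)).
  apply/ffunP => l; rewrite updE !ffunE ltnS leq_eqVlt.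
  case: (eqVneq l (Ordinal mn)) => [->|ne] /=; first by rewrite !eqxx.
  by have /negbTE-> : (l != m :> nat) by apply: contra_neq ne => lm; apply: val_inj.
rewrite -IH ?(ltnW mn) //; set k := Ordinal mn.
have [/existsP[s /agree xy]|noarc] := boolP [exists s, ((k, i), s) \in K].
  congr (f _ i); apply/ffunP => l; rewrite updE !ffunE.
  by case: eqP => [->|//]; rewrite ltnn xy.
apply: fds_upd_indep; [|exact: mix_in|exact: Hy].
by move=> s; apply: contraNN noarc => ks; apply/existsP; exists s.
Qed.

End FdsOnGraph.

Lemma interaction_graph_unique n lo hi (f : state n -> state n) (K L : sgraph n) :
  is_interaction_graph lo hi f K -> is_interaction_graph lo hi f L -> K = L.
Proof.
by move=> fK fL; apply/setP => -[[j i] s]; apply/idP/idP => [/fK/fL|/fL/fK].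
Qed.

Section RankByKey.
Variables (T : finType) (key : T -> nat) (D : {set T}).
Hypothesis key_inj : {in D &, injective key}.

Definition rank_in (e : T) : nat := #|[set e' in D | (key e' < key e)%N]|.+1.

Lemma rank_in_le e : e \in D -> (rank_in e <= #|D|)%N.
Proof.
move=> De; apply: proper_card; apply/properP; split.
  by apply/subsetP => e'; rewrite inE => /andP[].
by exists e; rewrite // inE ltnn andbF.
Qed.

Lemma ltn_rank_in e e' : e \in D -> e' \in D ->
  (rank_in e' < rank_in e)%N = (key e' < key e)%N.
Proof.
have mono d d' : d' \in D -> (key d' < key d)%N -> (rank_in d' < rank_in d)%N.
  move=> Dd' lt; rewrite ltnS; apply: proper_card; apply/properP; split.
    by apply/subsetP => d''; rewrite !inE => /andP[-> /ltn_trans->].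
  by exists d'; rewrite !inE ?ltnn ?andbF // Dd' lt.
move=> De De'; apply/idP/idP; last exact: mono.
case: (ltngtP (key e') (key e)) => // [lt|eq] rlt.
  by have := ltn_trans rlt (mono _ _ De lt); rewrite ltnn.
by move: rlt; rewrite (key_inj De' De eq) ltnn.
Qed.

Lemma rank_in_inj : {in D &, injective rank_in}.
Proof.
move=> e e' De De' Er; apply: key_inj => //.
case: (ltngtP (key e) (key e')) => // lt.
  by move: lt; rewrite -(ltn_rank_in De' De) Er ltnn.
by move: lt; rewrite -(ltn_rank_in De De') Er ltnn.
Qed.

End RankByKey.

Section Combine.
Variables (T : finType) (raising : pred T) (lo hi : int).

Definition combine (S : {set T}) (v : int) : int :=
  if [exists e in S, ~~ raising e] then lo else if S == set0 then v else hi.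

Lemma combine_set0 v : combine set0 v = v.
Proof. by rewrite /combine eqxx; case: ifP => // /existsP[e]; rewrite inE. Qed.

Lemma combine_cases S v : [\/ combine S v = lo, combine S v = hi | combine S v = v].
Proof.
by rewrite /combine; case: ifP => _; [apply: Or31|case: ifP => _; [apply: Or33|apply: Or32]].
Qed.

Lemma combine_indep S v v' : S != set0 -> combine S v = combine S v'.
Proof. by rewrite /combine => /negbTE->. Qed.

Let setU1_neq0 (S : {set T}) (e : T) : (e |: S == set0) = false.
Proof. by apply/negbTE/set0Pn; exists e; rewrite !inE eqxx. Qed.

Lemma combine_setU1 (S : {set T}) (e : T) v : lo <= v <= hi ->
  if raising e then combine S v <= combine (e |: S) v
  else combine (e |: S) v <= combine S v.
Proof.
move=> /andP[lv vh]; have lh := le_trans lv vh; rewrite /combine setU1_neq0.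
have -> : [exists e' in e |: S, ~~ raising e'] = ~~ raising e || [exists e' in S, ~~ raising e'].
  apply/existsP/orP => [[e' /andP[]]|[ne|/existsP[e' /andP[Se' ne]]]].
  - rewrite !inE => /orP[/eqP-> ne|Se' ne]; first by left.
    by right; apply/existsP; exists e'; rewrite Se'.
  - by exists e; rewrite !inE eqxx.
  - by exists e'; rewrite !inE Se' orbT.
by case: (raising e); case: [exists _ in S, _]; case: (S == set0).
Qed.

Lemma combine_all_raising (S : {set T}) v :
  {in S, forall e, raising e} -> combine S v = if S == set0 then v else hi.
Proof. by move=> Sr; rewrite /combine; case: existsP => // -[e /andP[/Sr->]]. Qed.

Lemma combine_setU1_strict (S : {set T}) (e : T) v : lo <= v <= hi ->
  {in S, forall e', raising e'} -> (S != set0 -> ~~ raising e) ->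
  (if raising e then v < hi else lo < v) ->
  if raising e then combine S v < combine (e |: S) v
  else combine (e |: S) v < combine S v.
Proof.
move=> /andP[lv vh] Sr Snon; rewrite (combine_all_raising v Sr).
case: (boolP (raising e)) => re lt.
  have S0 : S == set0 by apply: contraTT re => /Snon.
  rewrite S0 combine_all_raising ?setU1_neq0 // => e'.
  by rewrite !inE => /orP[/eqP->|/Sr].
have -> : combine (e |: S) v = lo.
  by rewrite /combine; case: existsP => // -[]; exists e; rewrite !inE eqxx re.
by case: ifP => _ //; exact: lt_le_trans lt vh.
Qed.

End Combine.

Section Extension.
Variables (n : nat) (G H : sgraph n).
Hypothesis HsubG : H \subset G.
Hypothesis no_sink_to_source : forall j i s, ((j, i), s) \in G ->
  ~~ (is_sink H j && is_source H i).
Hypothesis no_arc_to_isolated : forall j i s, ((j, i), s) \in G -> ~~ is_isolated H i.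
Variables (loY hiY : 'I_n -> int) (h : state n -> state n).
Hypothesis h_on_H : fds_on loY hiY h H.
Hypothesis h_db : degree_bounded loY hiY h.
Variable xi : state n.
Hypothesis xiY : inbox loY hiY xi.
Variables hmin hmax : 'I_n -> int.
Hypothesis hmin_attained : forall i, exists2 y, inbox loY hiY y & h y i = hmin i.
Hypothesis hmax_attained : forall i, exists2 y, inbox loY hiY y & h y i = hmax i.
Hypothesis hmin_le : forall i z, inbox loY hiY z -> hmin i <= h z i.
Hypothesis hmax_ge : forall i z, inbox loY hiY z -> h z i <= hmax i.

Local Notation inY := (inbox loY hiY).
Local Notation arc := ('I_n * 'I_n * bool)%type.

Definition A := [set i | is_source H i && ~~ is_source G i].
Definition B := [set i | is_sink H i && ~~ is_sink G i].

Lemma B_sink k : k \in B -> is_sink H k.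
Proof. by rewrite inE => /andP[]. Qed.

Lemma notin_B_of_Harc j i s : ((j, i), s) \in H -> j \notin B.
Proof. by move=> ji; apply/negP => /B_sink/is_sinkP/(_ i s); rewrite ji. Qed.

Lemma notin_A_of_Harc j i s : ((j, i), s) \in H -> i \notin A.
Proof. by move=> ji; rewrite inE; apply/negP => /andP[/is_sourceP/(_ j s)]; rewrite ji. Qed.

Lemma notin_B_of_arc_to_A j i s : ((j, i), s) \in G -> i \in A -> j \notin B.
Proof.
move=> ji; rewrite inE => /andP[srci _]; apply/negP => /B_sink sinkj.
by move: (no_sink_to_source ji); rewrite sinkj srci.
Qed.

Lemma exists_Harc_into j i s : ((j, i), s) \in G -> i \notin A ->
  exists k s', ((k, i), s') \in H.
Proof.
move=> ji; rewrite inE negb_and negbK => /orP[/not_sourceP //|/is_sourceP/(_ j s)].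
by rewrite ji.
Qed.

Lemma A_wide i : i \in A -> loY i < hiY i.
Proof.
rewrite inE => /andP[srci /not_sourceP[j [s ji]]].
move: (no_arc_to_isolated ji); rewrite /is_isolated srci => /not_sinkP[k [s' ik]].
by have [x [Yx + _]] := (fds_arcP h_on_H _ _ _).1 ik; have := Yx i; lia.
Qed.

Lemma B_narrow k : k \in B -> hiY k - loY k <= 1.
Proof.
move=> kB; have := h_db (proj2 h_on_H) k; rewrite (eqP (B_sink kB)) /=.
by case: ifP => _; lia.
Qed.

Lemma hmin_lt_hmax k i s : ((k, i), s) \in H -> hmin i < hmax i.
Proof.
move=> ki; have [z [Yz zk jump]] := (fds_arcP h_on_H _ _ _).1 ki.
have Yz' : inY (incr z k) by rewrite incr_upd; apply: inbox_upd => //; have := Yz k; lia.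
have := hmin_le i Yz; have := hmax_ge i Yz; have := hmin_le i Yz'; have := hmax_ge i Yz'.
by move: jump; case: (s); lia.
Qed.

(* The neutral interval of [k]: the part of [X_k] on which no new arc out of [k] is active. *)
Definition nlo k := if k \in B then xi k else loY k.
Definition nhi k := if k \in B then xi k else hiY k.

Lemma neutral_bounds k : [/\ loY k <= nlo k, nlo k <= nhi k & nhi k <= hiY k].
Proof.
rewrite /nlo /nhi; case: ifP => _; first by have := xiY k; case/andP.
by have := fds_lo_le_hi h_on_H k.
Qed.

Lemma neutral_of_inY x k : inY x -> (k \in B -> x k = xi k) -> nlo k <= x k <= nhi k.
Proof. by rewrite /nlo /nhi; case: ifP => [_ _ ->|_ Yx _]; rewrite ?lexx. Qed.

Definition new_arcs : {set arc} := G :\: H.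

Definition below_top i := h xi i < hiY i.

(* Each new arc [e] out of [j] owns one value of [X_j] beyond the neutral
   interval, above it if [upward e] and below it otherwise; past that value
   [e] is active and pushes its target to [fmax] if [raising e], else to
   [fmin].  For [j] in [B] the side keeps [Y_j] inside [X_j]; into a target
   in [A] (where [h] is constant) all arcs are raising exactly when
   [h xi] is below the top of [Y]. *)
Definition upward (e : arc) : bool :=
  if e.1.1 \in B then xi e.1.1 == loY e.1.1
  else if e.1.2 \in A then e.2 == below_top e.1.2 else true.

Definition raising (e : arc) : bool := e.2 == upward e.

Definition new_out j d : {set arc} :=
  [set e in new_arcs | (e.1.1 == j) && (upward e == d)].

(* Raising arcs come first, so that a pair of parallel new arcs on the same
   side of [j] is activated raising one first. *)
Definition arc_key (e : arc) : nat := (~~ raising e) * #|{: arc}| + enum_rank e.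

Definition arc_rank (e : arc) : nat := rank_in arc_key (new_out e.1.1 (upward e)) e.

Lemma arc_key_inj : injective arc_key.
Proof.
move=> e e'; rewrite /arc_key => E; apply: enum_rank_inj; apply: val_inj => /=.
have : (enum_rank e < #|{: arc}|)%N := ltn_ord _.
have : (enum_rank e' < #|{: arc}|)%N := ltn_ord _.
by move: E; case: (~~ raising e); case: (~~ raising e'); rewrite /= ?mul1n ?mul0n; lia.
Qed.

Lemma arc_rank_inj e e' : e \in new_arcs -> e' \in new_arcs ->
  e.1.1 = e'.1.1 -> upward e = upward e' -> arc_rank e = arc_rank e' -> e = e'.
Proof.
move=> Ne Ne' E1 Eu; rewrite /arc_rank -E1 -Eu; apply: rank_in_inj.
- by move=> ? ? _ _; apply: arc_key_inj.
- by rewrite inE Ne !eqxx.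
- by rewrite inE Ne' E1 Eu !eqxx.
Qed.

Lemma arc_rank_le e : e \in new_arcs -> (arc_rank e <= #|new_out e.1.1 (upward e)|)%N.
Proof. by move=> Ne; apply: rank_in_le; rewrite inE Ne !eqxx. Qed.

Lemma raising_of_arc_rank_lt j i s :
  ((j, i), s) \in new_arcs -> ((j, i), ~~ s) \in new_arcs ->
  upward ((j, i), ~~ s) = upward ((j, i), s) ->
  (arc_rank ((j, i), ~~ s) < arc_rank ((j, i), s))%N ->
  raising ((j, i), ~~ s) && ~~ raising ((j, i), s).
Proof.
move=> Ne Ne' Eu; rewrite /arc_rank /= Eu ltn_rank_in; first last.
- by rewrite inE Ne' Eu !eqxx.
- by rewrite inE Ne !eqxx.
- by move=> ? ? _ _; apply: arc_key_inj.
rewrite /arc_key.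
have -> : raising ((j, i), ~~ s) = ~~ raising ((j, i), s).
  by rewrite /raising /= Eu; case: (s); case: (upward _).
have : (enum_rank ((j, i), s) < #|{: arc}|)%N := ltn_ord _.
by case: (raising ((j, i), s)); rewrite /= ?mul1n ?mul0n; lia.
Qed.

Definition loX k := nlo k - #|new_out k false|%:Z.
Definition hiX k := nhi k + #|new_out k true|%:Z.

Lemma card_new_out_B k : k \in B ->
  #|new_out k (~~ (xi k == loY k))| = 0%N /\ (0 < #|new_out k (xi k == loY k)|)%N.
Proof.
move=> kB; rewrite card_gt0; split.
  apply/eqP; rewrite cards_eq0; apply/eqP/setP => e; rewrite !inE.
  apply/negbTE/negP => /and3P[_ /eqP Ek]; rewrite /upward Ek kB.
  by case: (xi k == loY k).
move: kB; rewrite inE => /andP[sinkH nsinkG]; have /not_sinkP[i [s ki]] := nsinkG.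
apply/set0Pn; exists ((k, i), s); rewrite !inE ki /= (negbTE (is_sinkP _ _ sinkH i s)).
by rewrite /upward /= inE sinkH nsinkG !eqxx.
Qed.

Lemma X_contains_Y k : loX k <= loY k /\ hiY k <= hiX k.
Proof.
rewrite /loX /hiX /nlo /nhi; case: ifP => kB; last by split; lia.
have := xiY k; have := B_narrow kB; have [] := card_new_out_B kB.
by case: (eqVneq (xi k) (loY k)) => [E|/eqP ne] /=; lia.
Qed.

Lemma inX_of_inY x : inY x -> inbox loX hiX x.
Proof. by move=> Yx k; have [] := X_contains_Y k; have := Yx k; lia. Qed.

Definition clamp k (v : int) : int := Num.max (nlo k) (Num.min (nhi k) v).

Definition retract (x : state n) : state n := [ffun k => clamp k (x k)].

Lemma retract_inY (x : state n) : inY (retract x).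
Proof. by move=> k; rewrite ffunE /clamp; have [] := neutral_bounds k; lia. Qed.

Lemma retract_neutral (x : state n) k : nlo k <= x k <= nhi k -> retract x k = x k.
Proof. by rewrite ffunE /clamp; have [] := neutral_bounds k; lia. Qed.

Lemma retract_id x : inY x -> {in B, forall k, x k = xi k} -> retract x = x.
Proof.
move=> Yx xB; apply/ffunP => k; rewrite -[RHS](retract_neutral (x := x)) ?ffunE //.
by apply: neutral_of_inY => // /xB.
Qed.

Lemma retract_incr_neutral (x : state n) j : nlo j <= x j < nhi j ->
  retract (incr x j) = incr (retract x) j.
Proof.
move=> xj; apply/ffunP => k; rewrite !ffunE; case: eqP => [->|_]; last by rewrite !addr0.
by rewrite /clamp; have [] := neutral_bounds j; lia.
Qed.

Lemma retract_incr_outside (x : state n) j : ~~ (nlo j <= x j < nhi j) ->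
  retract (incr x j) = retract x.
Proof.
move=> xj; apply/ffunP => k; rewrite !ffunE; case: eqP => [->|_]; last by rewrite addr0.
by rewrite /clamp; have [] := neutral_bounds j; lia.
Qed.

Definition active (x : state n) (e : arc) : bool :=
  (e \in new_arcs) &&
  (if upward e then nhi e.1.1 + (arc_rank e)%:Z <= x e.1.1
   else x e.1.1 <= nlo e.1.1 - (arc_rank e)%:Z).

Definition active_in x i : {set arc} := [set e | active x e & e.1.2 == i].

Lemma inactive_neutral (x : state n) (e : arc) :
  nlo e.1.1 <= x e.1.1 <= nhi e.1.1 -> active x e = false.
Proof.
move=> xe; apply/negbTE; rewrite negb_and; apply/orP; right.
have : (0 < arc_rank e)%N by []; have [] := neutral_bounds e.1.1.
by case: (upward e); rewrite -ltNge; lia.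
Qed.

Lemma active_in_neutral (x : state n) i : (forall k, nlo k <= x k <= nhi k) -> active_in x i = set0.
Proof. by move=> xN; apply/setP => e; rewrite !inE inactive_neutral. Qed.

Lemma active_incr_other (x : state n) j (e : arc) : e.1.1 != j -> active (incr x j) e = active x e.
Proof. by move=> ej; rewrite /active incrE (negbTE ej). Qed.

Lemma active_incr_toggle (x : state n) j (e : arc) :
  e.1.1 = j -> active (incr x j) e != active x e ->
  [/\ e \in new_arcs, active (incr x j) e = upward e, upward e = (nhi j <= x j) &
      (arc_rank e)%:Z = if nhi j <= x j then x j + 1 - nhi j else nlo j - x j].
Proof.
move=> Ej; subst j; rewrite /active incrE eqxx; have [? ? ?] := neutral_bounds e.1.1.
have : (0 < arc_rank e)%N by []; case: (e \in new_arcs) => //= r1.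
case: (upward e) => /=; case: (lerP (nhi e.1.1) (x e.1.1)) => c;
  (case: lerP => c1; case: lerP => c2) => //= _; split => //; lia.
Qed.

Lemma toggle_unique (x : state n) j i s s' :
  active (incr x j) ((j, i), s) != active x ((j, i), s) ->
  active (incr x j) ((j, i), s') != active x ((j, i), s') -> s = s'.
Proof.
move=> /(active_incr_toggle erefl) [Ne _ Eu Er] /(active_incr_toggle erefl) [Ne' _ Eu' Er'].
have [] // : ((j, i), s) = ((j, i), s').
apply: arc_rank_inj => //; first by rewrite Eu Eu'.
by apply/eqP; rewrite -eqz_nat Er Er'.
Qed.

Definition fmin i := if i \in A then loY i else hmin i.
Definition fmax i := if i \in A then hiY i else hmax i.

Lemma fmin_le_h i z : inY z -> fmin i <= h z i <= fmax i.
Proof.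
rewrite /fmin /fmax => Yz; case: ifP => _; last by rewrite hmin_le ?hmax_ge.
exact: fds_inbox h_on_H z Yz i.
Qed.

Lemma fmin_fmax_inY i : loY i <= fmin i /\ fmax i <= hiY i.
Proof.
rewrite /fmin /fmax; case: ifP => _; first by rewrite !lexx.
have [y Yy <-] := hmin_attained i; have [y' Yy' <-] := hmax_attained i.
by have := fds_inbox h_on_H Yy i; have := fds_inbox h_on_H Yy' i; lia.
Qed.

Definition fext (x : state n) : state n :=
  [ffun i => combine raising (fmin i) (fmax i) (active_in x i) (h (retract x) i)].

Lemma fext_inY x : inY (fext x).
Proof.
move=> i; rewrite ffunE; have := fmin_le_h i (retract_inY x); have [] := fmin_fmax_inY i.
by case: (combine_cases raising (fmin i) (fmax i) (active_in x i) (h (retract x) i)) => ->; lia.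
Qed.

Lemma fext_in_image x i : i \notin A -> exists2 y, inY y & fext x i = h y i.
Proof.
rewrite ffunE /fmin /fmax => /negbTE->.
case: (combine_cases raising (hmin i) (hmax i) (active_in x i) (h (retract x) i)) => ->.
- by have [y] := hmin_attained i; exists y.
- by have [y] := hmax_attained i; exists y.
- by exists (retract x); first exact: retract_inY.
Qed.

Lemma fext_eq_h x : inY x -> {in B, forall k, x k = xi k} -> fext x = h x.
Proof.
move=> Yx xB; apply/ffunP => i; rewrite ffunE retract_id // active_in_neutral ?combine_set0 //.
by move=> k; apply: neutral_of_inY => // /xB.
Qed.

Lemma fext_eq_h_at x i : inY x -> (forall j s, ((j, i), s) \in G -> j \notin B) ->
  fext x i = h x i.
Proof.
move=> Yx notB; rewrite ffunE.
have -> : active_in x i = set0.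
  apply/setP => -[[j i'] s]; rewrite !inE /=; case: eqP => [->|]; rewrite ?andbF //.
  case: (boolP (((j, i), s) \in new_arcs)) => [Ne|]; last by rewrite /active => /negbTE->.
  apply/negbTE; rewrite inactive_neutral //= neutral_of_inY // => jB.
  by move: (notB _ _ (subsetP (subsetDl G H) _ Ne)); rewrite jB.
rewrite combine_set0; apply: (fds_eq_on_in_neighbours h_on_H (retract_inY x) Yx).
by move=> j s /notin_B_of_Harc jB; apply: retract_neutral; apply: neutral_of_inY => // /(negP jB).
Qed.

Lemma active_in_setU1 x x' i e : e.1.2 = i ->
  (forall e', e'.1.2 = i -> e' != e -> active x' e' = active x e') ->
  active x' e -> active_in x' i = e |: active_in x i.
Proof.
move=> ei others act'; apply/setP => e'; rewrite !inE.
case: (eqVneq e' e) => [->|ne] /=; first by rewrite act' ei eqxx.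
by case: (eqVneq e'.1.2 i) => [/others/(_ ne)->|]; rewrite ?andbF.
Qed.

Lemma active_in_incr_same (x : state n) j i :
  (forall s, active (incr x j) ((j, i), s) = active x ((j, i), s)) ->
  active_in (incr x j) i = active_in x i.
Proof.
move=> same; apply/setP => -[[k i'] s]; rewrite !inE /=.
case: (eqVneq i' i) => [->|]; rewrite ?andbF //.
by case: (eqVneq k j) => [->|kj]; rewrite ?same ?active_incr_other.
Qed.

Lemma others_untoggled (x : state n) j i s :
  active (incr x j) ((j, i), s) != active x ((j, i), s) ->
  forall e', e'.1.2 = i -> e' != ((j, i), s) -> active (incr x j) e' = active x e'.
Proof.
move=> tog [[k i'] s'] /= Ei; subst i'.
case: (eqVneq k j) => [->|kj _]; last exact: active_incr_other.
move=> ne; apply/eqP; apply: contraNT ne => tog'.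
by rewrite (toggle_unique tog tog').
Qed.

Lemma fext_toggle (x : state n) j i s :
  active (incr x j) ((j, i), s) != active x ((j, i), s) -> retract (incr x j) = retract x ->
  let S := active_in (if upward ((j, i), s) then x else incr x j) i in
  let c T := combine raising (fmin i) (fmax i) T (h (retract x) i) in
  (fext x i, fext (incr x j) i) =
  if upward ((j, i), s) then (c S, c (((j, i), s) |: S)) else (c (((j, i), s) |: S), c S).
Proof.
move=> tog Er S c; have [_ act' _ _] := active_incr_toggle (e := ((j, i), s)) (j := j) erefl tog.
have others := others_untoggled tog; rewrite /S /c !ffunE Er.
case: (upward _) act' => act'.
  by rewrite (active_in_setU1 (e := ((j, i), s)) (i := i) erefl others act').
have actx : active x ((j, i), s) by move: tog; rewrite act'; case: (active x _).
have others' e' : e'.1.2 = i -> e' != ((j, i), s) -> active x e' = active (incr x j) e'.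
  by move=> ei ne; rewrite others.
by rewrite (active_in_setU1 (e := ((j, i), s)) (i := i) erefl others' actx).
Qed.

Lemma fext_toggle_le (x : state n) j i s :
  active (incr x j) ((j, i), s) != active x ((j, i), s) -> retract (incr x j) = retract x ->
  if s then fext x i <= fext (incr x j) i else fext (incr x j) i <= fext x i.
Proof.
move=> tog Er; have := fext_toggle tog Er.
set S := active_in _ i.
have := combine_setU1 raising S ((j, i), s) (fmin_le_h i (retract_inY x)).
by rewrite /raising /=; case: (upward _); case: (s) => /= + [-> ->].
Qed.

(* A step inside the neutral interval moves [retract x] and activates nothing,
   so it is a step of [h]; a step outside it toggles at most one arc. *)
Lemma fext_sound j i s : has_arc loX hiX fext j i s -> ((j, i), s) \in G.
Proof.
move=> [x [_ _ step]]; have [inN|outN] := boolP (nlo j <= x j < nhi j).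
  have same : active_in (incr x j) i = active_in x i.
    apply: active_in_incr_same => s'; rewrite !inactive_neutral //= ?incrE ?eqxx;
      have [] := neutral_bounds j; lia.
  move: step; rewrite !ffunE same (retract_incr_neutral inN).
  have [/eqP->|ne] := boolP (active_in x i == set0).
    rewrite !combine_set0 => step; apply: (subsetP HsubG); apply/(fds_arcP h_on_H).
    exists (retract x); split => //; first exact: retract_inY.
    by rewrite retract_neutral; have [] := neutral_bounds j; lia.
  by rewrite (combine_indep _ _ _ _ (h (retract x) i) ne) subrr; case: (s).
have Er := retract_incr_outside outN.
have [tog|same_s] := boolP (active (incr x j) ((j, i), s) != active x ((j, i), s)).
  by have [Ne _ _ _] := active_incr_toggle erefl tog; apply: (subsetP (subsetDl G H)).
have [tog'|same_ns] := boolP (active (incr x j) ((j, i), ~~ s) != active x ((j, i), ~~ s)).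
  by have := fext_toggle_le tog' Er; move: step; case: (s) => /=; lia.
have same : active_in (incr x j) i = active_in x i.
  apply: active_in_incr_same => s'; apply/eqP.
  by move: same_s same_ns; rewrite !negbK; case: (s); case: s'.
by move: step; rewrite !ffunE same Er subrr; case: (s).
Qed.

Definition reset_B (w : state n) : state n := [ffun k => if k \in B then xi k else w k].

Lemma reset_B_inY w : inY w -> inY (reset_B w).
Proof. by move=> Yw k; rewrite ffunE; case: ifP. Qed.

Lemma reset_B_id w : {in B, forall k, reset_B w k = xi k}.
Proof. by move=> k kB; rewrite ffunE kB. Qed.

Lemma reset_B_incr w j : j \notin B -> incr (reset_B w) j = reset_B (incr w j).
Proof.
move=> jB; apply/ffunP => k; rewrite !ffunE.
by case: (eqVneq k j) => [->|_]; [rewrite (negbTE jB)|case: (k \in B); rewrite ?addr0].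
Qed.

Lemma h_reset_B w i : inY w -> h (reset_B w) i = h w i.
Proof.
move=> Yw; apply: (fds_eq_on_in_neighbours h_on_H (reset_B_inY Yw) Yw) => k s.
by move/notin_B_of_Harc => kB; rewrite ffunE (negbTE kB).
Qed.

Lemma incr_inY w j : inY w -> w j < hiY j -> inY (incr w j).
Proof. by move=> Yw wj; rewrite incr_upd; apply: inbox_upd => //; have := Yw j; lia. Qed.

Definition boundary (e : arc) : int := if upward e then nhi e.1.1 else nlo e.1.1.

(* A state of [Y] from which one step along [e.1.1], taken at the right
   distance from the neutral interval, makes [e] change [fext] strictly. *)
Definition realizer (e : arc) (q : state n) : Prop :=
  [/\ inY q, {in B, forall k, q k = xi k}, q e.1.1 = boundary e &
      if raising e then h q e.1.2 < fmax e.1.2 else fmin e.1.2 < h q e.1.2].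

Lemma active_parallel_raising (y : state n) j i s : ((j, i), s) \in new_arcs ->
  y j = (if upward ((j, i), s) then nhi j + (arc_rank ((j, i), s))%:Z - 1
         else nlo j - (arc_rank ((j, i), s))%:Z + 1) ->
  active y ((j, i), ~~ s) -> raising ((j, i), ~~ s) && ~~ raising ((j, i), s).
Proof.
move=> Ne yj /andP[Ne' act']; have [? ? ?] := neutral_bounds j.
have r1 : (0 < arc_rank ((j, i), s))%N by [].
have r1' : (0 < arc_rank ((j, i), ~~ s))%N by [].
move: act'; set r := arc_rank _; set r' := arc_rank _ in r1' *; rewrite /= yj => act'.
have Eu : upward ((j, i), ~~ s) = upward ((j, i), s).
  by move: act'; case: (upward ((j, i), ~~ s)); case: (upward ((j, i), s)) => //; lia.
by apply: raising_of_arc_rank_lt => //; move: act'; rewrite Eu; case: (upward _); lia.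
Qed.

Lemma active_in_beside_neutral j i s q : ((j, i), s) \in new_arcs -> inY q ->
  {in B, forall k, q k = xi k} ->
  {in active_in (upd q j (if upward ((j, i), s) then nhi j + (arc_rank ((j, i), s))%:Z - 1
                          else nlo j - (arc_rank ((j, i), s))%:Z + 1)) i,
   forall e', raising e' && ~~ raising ((j, i), s)}.
Proof.
move=> Ne Yq qB; have r1 : (0 < arc_rank ((j, i), s))%N by [].
set r := arc_rank _ in r1 *; set u := upward _; set c := if u then _ else _.
move=> [[k i'] s']; rewrite inE /= => /andP[act /eqP Ei]; subst i'.
have Ek : k = j.
  apply/eqP; apply: contraTT act => kj; rewrite inactive_neutral //= updE (negbTE kj).
  by apply: neutral_of_inY => // /qB.
subst k; have Es : s' = ~~ s.
  apply/eqP; apply: contraTT act => ns.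
  have -> : s' = s by move: ns; case: (s); case: (s').
  have [? ? ?] := neutral_bounds j.
  by rewrite /active /= Ne updE eqxx -/r -/u /c; case: (u); lia.
by subst s'; apply: active_parallel_raising act => //; rewrite updE eqxx.
Qed.

Lemma realizer_arc j i s q : ((j, i), s) \in new_arcs -> realizer ((j, i), s) q ->
  has_arc loX hiX fext j i s.
Proof.
move=> Ne [Yq qB qj hq].
have [lN Nn nH] := neutral_bounds j; have [_ XY] := X_contains_Y j.
have r1 : (0 < arc_rank ((j, i), s))%N by []; have rle := arc_rank_le Ne.
rewrite /boundary /= in qj rle; set r := arc_rank _ in r1 rle *; set u := upward _ in qj rle *.
pose c := if u then nhi j + r%:Z - 1 else nlo j - r%:Z + 1.
pose x := upd q j (if u then c else c - 1).
have Xxj : loX j <= x j < hiX j.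
  by rewrite /x updE eqxx /loX /hiX /c; move: rle; case: (u) => /= rle; lia.
have x'E : incr x j = upd q j (if u then c + 1 else c).
  by rewrite incr_upd updE eqxx upd_upd; case: (u); rewrite // subrK.
have Er : retract (incr x j) = retract x.
  by apply: retract_incr_outside; rewrite updE eqxx /c; case: (u); lia.
have retr : retract x = q.
  apply/ffunP => k; rewrite ffunE updE; case: eqP => [->|_].
    by rewrite qj /clamp /c; case: (u); lia.
  by rewrite -[RHS](retract_neutral (x := q)) ?ffunE // neutral_of_inY // => /qB.
have tog : active (incr x j) ((j, i), s) != active x ((j, i), s).
  by rewrite /active /= Ne x'E !updE eqxx -/r -/u /c; case: (u); lia.
set y := if u then x else incr x j.
have yE : y = upd q j c by rewrite /y x'E /x; case: (u).
have Sraise : {in active_in y i, forall e', raising e' && ~~ raising ((j, i), s)}.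
  by rewrite yE; exact: active_in_beside_neutral.
have := fext_toggle tog Er; rewrite -/u -/y retr; set S := active_in y i => vals.
have Sr : {in S, forall e', raising e'} by move=> e' /Sraise /andP[].
have Snon : S != set0 -> ~~ raising ((j, i), s) by case/set0Pn => e' /Sraise /andP[].
have strict := combine_setU1_strict (fmin_le_h i Yq) Sr Snon hq.
rewrite (_ : raising _ = (s == u)) // in strict.
exists x; split; last first.
  by move: vals strict; case: (u) => -[-> ->]; case: (s); rewrite /= ?subr_gt0 ?subr_lt0.
- by case/andP: Xxj => _ ->.
- move=> k; case: (eqVneq k j) => [->|kj]; first by case/andP: Xxj => -> /ltW->.
  by rewrite /x updE (negbTE kj); apply: inX_of_inY.
Qed.

Lemma realizer_reset j i s p : inY p -> (forall s', ((j, i), s') \notin H) ->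
  (if raising ((j, i), s) then h p i < fmax i else fmin i < h p i) ->
  realizer ((j, i), s) (upd (reset_B p) j (boundary ((j, i), s))).
Proof.
move=> Yp noH hp; have [? ? ?] := neutral_bounds j.
have hq : h (upd (reset_B p) j (boundary ((j, i), s))) i = h p i.
  rewrite -(h_reset_B i Yp); apply: (fds_upd_indep h_on_H noH (reset_B_inY Yp)).
  by rewrite /boundary /=; case: (upward _); lia.
split; rewrite ?hq ?updE ?eqxx //.
- by apply: inbox_upd; [exact: reset_B_inY|rewrite /boundary /=; case: (upward _); lia].
- move=> k kB; rewrite updE reset_B_id //; case: eqP => // Ekj; subst k.
  by rewrite /boundary /nlo /nhi /= kB; case: (upward _).
Qed.

Lemma realizer_parallel j i s : ((j, i), s) \in new_arcs -> ((j, i), ~~ s) \in H ->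
  exists q, realizer ((j, i), s) q.
Proof.
move=> Ne Hns; have jB := notin_B_of_Harc Hns; have iA := notin_A_of_Harc Hns.
have up : upward ((j, i), s) = true by rewrite /upward /= (negbTE jB) (negbTE iA).
have [w [Yw wj jump]] := (fds_arcP h_on_H _ _ _).1 Hns.
have Yw' := incr_inY Yw wj.
have noH : ((j, i), s) \notin H by case/setDP: Ne.
have /andP[lw1 w1h] : loY j <= w j + 1 <= hiY j by have := Yw j; lia.
have mono := fds_monotone h_on_H noH (reset_B_inY Yw) lw1 w1h (lexx _).
have step : upd (reset_B w) j (w j + 1) = reset_B (incr w j).
  by rewrite -reset_B_incr // incr_upd [reset_B w j]ffunE (negbTE jB).
rewrite step h_reset_B // in mono.
exists (upd (reset_B w) j (hiY j)); split.
- by apply: inbox_upd; [exact: reset_B_inY|have := fds_lo_le_hi h_on_H j; lia].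
- move=> k kB; rewrite updE reset_B_id //; case: eqP => // Ekj.
  by move: jB; rewrite -Ekj kB.
- by rewrite updE eqxx /boundary up /= /nhi (negbTE jB).
rewrite /raising up /=; have := fmin_le_h i Yw.
by move: jump mono; case: (s) => /=; lia.
Qed.

Lemma realizer_exists j i s : ((j, i), s) \in new_arcs -> exists q, realizer ((j, i), s) q.
Proof.
move=> Ne; have [Hns|nHns] := boolP (((j, i), ~~ s) \in H); first exact: realizer_parallel.
have [Gs nHs] := setDP Ne.
have noH : forall s', ((j, i), s') \notin H.
  move=> s'; case: (eqVneq s' s) => [->//|ns].
  by have -> : s' = ~~ s by move: ns; case: (s); case: (s').
have [iA|iA] := boolP (i \in A).
  exists (upd (reset_B xi) j (boundary ((j, i), s))); apply: realizer_reset => //.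
  have jB := notin_B_of_arc_to_A Gs iA; have := fds_inbox h_on_H xiY i; have := A_wide iA.
  rewrite /raising /upward /= (negbTE jB) iA /fmax /fmin iA /below_top.
  by case: (ltrP (h xi i) (hiY i)); case: (s) => /=; lia.
have [k [s' ki]] := exists_Harc_into Gs iA; have hlt := hmin_lt_hmax ki.
have [[y Yy hy] [y' Yy' hy']] := (hmin_attained i, hmax_attained i).
case R: (raising ((j, i), s)).
  exists (upd (reset_B y) j (boundary ((j, i), s))); apply: realizer_reset => //.
  by rewrite R /fmax (negbTE iA) hy.
exists (upd (reset_B y') j (boundary ((j, i), s))); apply: realizer_reset => //.
by rewrite R /fmin (negbTE iA) hy'.
Qed.

Lemma fext_complete j i s : ((j, i), s) \in G -> has_arc loX hiX fext j i s.
Proof.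
move=> Gs; have [Hs|nHs] := boolP (((j, i), s) \in H); last first.
  have Ne : ((j, i), s) \in new_arcs by rewrite inE nHs.
  by have [q] := realizer_exists Ne; apply: realizer_arc.
have jB := notin_B_of_Harc Hs; have [z [Yz zj jump]] := (fds_arcP h_on_H _ _ _).1 Hs.
have fext_reset y : inY y -> fext (reset_B y) = h (reset_B y).
  by move=> Yy; apply: fext_eq_h; [exact: reset_B_inY|exact: reset_B_id].
exists (reset_B z); split.
- exact/inX_of_inY/reset_B_inY.
- by rewrite ffunE (negbTE jB); have [_ ?] := X_contains_Y j; lia.
- by rewrite reset_B_incr // !fext_reset ?h_reset_B //; exact: incr_inY.
Qed.

Lemma fext_on_G : is_interaction_graph loX hiX fext G.
Proof. by move=> j i s; split; [exact: fext_complete|exact: fext_sound]. Qed.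

Lemma outdeg_G j : outdeg G j = (outdeg H j + #|new_out j true| + #|new_out j false|)%N.
Proof.
rewrite (outdeg_subset j HsubG) -addnA -(cardsID [set e | upward e]).
congr (_ + (_ + _))%N; apply: eq_card => e; rewrite !inE;
  by case: (e \in H); case: (e \in G); case: (_ == j); case: (upward e).
Qed.

Lemma deg_bounded_G : deg_bounded_wrt loX hiX G.
Proof.
move=> j; have hb := h_db (proj2 h_on_H) j; have idl := indeg_subset j HsubG.
rewrite /loX /hiX; move: (outdeg_G j).
set a := #|new_out j true|; set b := #|new_out j false|; clearbody a b => oGE.
have [jB|jB] := boolP (j \in B).
  have oH : outdeg H j = 0%N by apply/eqP/B_sink.
  have oG : (outdeg G j == 0%N) = false by move: jB; rewrite inE => /andP[_ /negbTE].
  by rewrite oG /= /nhi /nlo jB; lia.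
rewrite /nhi /nlo (negbTE jB); case: ifP => [/andP[/eqP oG iG]|cG].
  have oH : outdeg H j = 0%N by lia.
  have [[[k j'] s]] : exists e, e \in [set e in G | e.1.2 == j] by apply/set0Pn; rewrite -card_gt0.
  rewrite inE => /andP[Gs /eqP/= Ej]; subst j'.
  move: (no_arc_to_isolated Gs); rewrite /is_isolated /is_sink oH eqxx andbT /is_source -lt0n.
  by move=> iH; move: hb; rewrite oH iH eqxx /=; lia.
move: hb; case: ifP => [/andP[oH iH]|_]; last by lia.
have : is_sink G j by move: jB; rewrite inE /is_sink oH /= negbK.
by rewrite /is_sink => /eqP oG; move: cG; rewrite oG eqxx /=; lia.
Qed.

Lemma extension_spec : exists (loX hiX : 'I_n -> int) (f : state n -> state n),
  [/\ fds_on loX hiX f G /\ degree_bounded loX hiX f,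
      (forall i, loX i <= loY i /\ hiY i <= hiX i),
      (forall x, inbox loX hiX x -> inY (f x)) /\
      (forall i, i \notin A -> forall x, inbox loX hiX x ->
          exists y, inY y /\ f x i = h y i),
      (forall x, inY x -> (forall i, i \in B -> x i = xi i) -> f x = h x) &
      (forall x, inY x -> forall i,
          (forall j s, ((j, i), s) \in G -> j \notin B) -> f x i = h x i)].
Proof.
exists loX, hiX, fext; split.
- split; [split; [split|exact: fext_on_G]|].
  + by move=> k; have [] := X_contains_Y k; have := fds_lo_le_hi h_on_H k; lia.
  + by move=> x _; exact/inX_of_inY/fext_inY.
  + by move=> K /(interaction_graph_unique fext_on_G) <-; exact: deg_bounded_G.
- exact: X_contains_Y.
- split=> [x _|i iA x _]; first exact: fext_inY.
  by have [y] := fext_in_image x iA; exists y.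
- by move=> x Yx xB; apply: fext_eq_h.
- by move=> x Yx i; apply: fext_eq_h_at.
Qed.

End Extension.

Theorem lemma9 (n : nat) (G H : sgraph n)
  (HsubG : H \subset G)
  (no_sink_to_source : forall j i s, ((j, i), s) \in G ->
      ~~ (is_sink H j && is_source H i))
  (no_arc_to_isolated : forall j i s, ((j, i), s) \in G -> ~~ is_isolated H i)
  (loY hiY : 'I_n -> int) (h : state n -> state n)
  (h_on_H : fds_on loY hiY h H) (h_db : degree_bounded loY hiY h)
  (xi : state n) (xiY : inbox loY hiY xi) :
  let A := [set i | is_source H i && ~~ is_source G i] in
  let B := [set i | is_sink H i && ~~ is_sink G i] in
  exists (loX hiX : 'I_n -> int) (f : state n -> state n),
    [/\ fds_on loX hiX f G /\ degree_bounded loX hiX f,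
        (forall i, loX i <= loY i /\ hiY i <= hiX i),
        (* (1) *) (forall x, inbox loX hiX x -> inbox loY hiY (f x)) /\
        (* (2) *) (forall i, i \notin A -> forall x, inbox loX hiX x ->
            exists y, inbox loY hiY y /\ f x i = h y i),
        (* (3) *) (forall x, inbox loY hiY x -> (forall i, i \in B -> x i = xi i) ->
            f x = h x) &
        (* (4) *) (forall x, inbox loY hiY x -> forall i,
            (forall j s, ((j, i), s) \in G -> j \notin B) -> f x i = h x i)].
Proof.
move=> A B; have hY i z : inbox loY hiY z -> loY i <= h z i <= hiY i.
  by move=> Yz; apply: fds_inbox h_on_H z Yz i.
have [hmin hmin_spec] := fin_all_exists (fun i =>
  image_min_exists (g := fun z => h z i) xiY (fun z Yz => proj1 (andP (hY i z Yz)))).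
have [hmax hmax_spec] := fin_all_exists (fun i =>
  image_max_exists (g := fun z => h z i) xiY (fun z Yz => proj2 (andP (hY i z Yz)))).
exact: (extension_spec HsubG no_sink_to_source no_arc_to_isolated h_on_H h_db xiY
  (fun i => (hmin_spec i).1) (fun i => (hmax_spec i).1)
  (fun i => (hmin_spec i).2) (fun i => (hmax_spec i).2)).
Qed.
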